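(* Let $T\subset\mathbb{R}^2$ be a convex polytope and $\Delta\subset\mathbb{R}^2$ a triangle. Let $(\lambda^*,u^* )$ be an optimal solution of the problem: maximize $\lambda$ subject to $\lambda\ge 0$, $u\in\mathbb{R}^2$, $\lambda\Delta+u\subseteq T$. If there exists a $(\Delta,T)$-inbody, then $S^*=\lambda^*\Delta+u^*$ is the only $(\Delta,T)$-inbody.
   Context: A triangle is the convex hull of three affinely independent points. For a convex set $C$ and $z\in\partial C$, $N_C(z)=\{v:\langle v,y-z\rangle\le 0\ \forall y\in C\}$. For a triangle $\Delta\subseteq\mathbb{R}^2$ and a nonempty convex set $T\subseteq\mathbb{R}^2$, a $(\Delta,T)$-inbody is a set $S\subseteq\mathbb{R}^2$ such that: (i) $S=\lambda\Delta+u$ for some $\lambda>0$, $u\in\mathbb{R}^2$; (ii) all three vertices of $S$ lie in $\partial T$; (iii) if $v_1,v_2,v_3$ are the vertices of $S$, there is no line $H$ through the origin such that $N_T(v_1)\cup N_T(v_2)\cup N_T(v_3)$ is contained in one of the two closed half-planes bounded by $H$. *)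

From HB Require Import structures.
From mathcomp Require Import all_boot all_order all_algebra.
From mathcomp Require Import reals.
Set Implicit Arguments. Unset Strict Implicit. Unset Printing Implicit Defensive.
Import Order.TTheory GRing.Theory Num.Theory.
Local Open Scope ring_scope.

Section Plane.
Variable R : realType.
Definition pt := (R * R)%type.

Definition dot (p q : pt) : R := p.1 * q.1 + p.2 * q.2.
Definition psub (p q : pt) : pt := (p.1 - q.1, p.2 - q.2).
Definition dist2 (p q : pt) : R := dot (psub p q) (psub p q).

Definition conv_hull (s : seq pt) (x : pt) : Prop :=
  exists w : 'I_(size s) -> R,
    (forall i, 0 <= w i) /\ \sum_(i < size s) w i = 1 /\
    x = (\sum_(i < size s) w i * (nth (0, 0) s i).1,
         \sum_(i < size s) w i * (nth (0, 0) s i).2).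

Definition is_polytope (T : pt -> Prop) : Prop :=
  exists s : seq pt, forall x, T x <-> conv_hull s x.

Definition aff_indep (a b c : pt) : Prop :=
  (b.1 - a.1) * (c.2 - a.2) - (b.2 - a.2) * (c.1 - a.1) != 0.

Definition triangle (a b c : pt) : pt -> Prop := conv_hull [:: a; b; c].

Definition hom_pt (lam : R) (u : pt) (y : pt) : pt :=
  (lam * y.1 + u.1, lam * y.2 + u.2).
Definition hom_set (D : pt -> Prop) (lam : R) (u : pt) (x : pt) : Prop :=
  exists y, D y /\ x = hom_pt lam u y.

Definition interior (C : pt -> Prop) (z : pt) : Prop :=
  exists e : R, 0 < e /\ forall y, dist2 y z < e * e -> C y.
Definition closure (C : pt -> Prop) (z : pt) : Prop :=
  forall e : R, 0 < e -> exists y, C y /\ dist2 y z < e * e.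
Definition boundary (C : pt -> Prop) (z : pt) : Prop :=
  closure C z /\ ~ interior C z.

Definition normal_cone (C : pt -> Prop) (z v : pt) : Prop :=
  forall y, C y -> dot v (psub y z) <= 0.

Definition inbody (a b c : pt) (T S : pt -> Prop) : Prop :=
  exists (lam : R) (u : pt),
    0 < lam /\
    (forall x, S x <-> hom_set (triangle a b c) lam u x) /\
    boundary T (hom_pt lam u a) /\ boundary T (hom_pt lam u b) /\
    boundary T (hom_pt lam u c) /\
    ~ (exists h : pt, h <> (0, 0) /\
         forall v, (normal_cone T (hom_pt lam u a) v \/
                    normal_cone T (hom_pt lam u b) v \/
                    normal_cone T (hom_pt lam u c) v) -> 0 <= dot h v).

Definition is_optimal (D T : pt -> Prop) (lam0 : R) (u0 : pt) : Prop :=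
  0 <= lam0 /\ (forall x, hom_set D lam0 u0 x -> T x) /\
  forall (lam : R) (u : pt), 0 <= lam ->
    (forall x, hom_set D lam u x -> T x) -> lam <= lam0.
End Plane.

From Pilot Require Import Defs.
(* The vertices of an inbody lam D + u lie on the boundary of T, and a polytope is
   closed (the continuous image of a compact simplex), so the inbody is feasible and
   lam <= lam0.  Conversely, suppose lam <= lam' and lam' D + u' lies in T.  For each
   q in D the translate lam D + u' + (lam' - lam) q of the inbody lies in T.  Moving
   all three vertices by one vector w while staying in T puts every normal cone at
   the vertices into the half-plane <v, w> <= 0, so condition (iii) forces w = 0,
   i.e. u' + (lam' - lam) q = u for all q in D.  Taking two distinct vertices q of D
   gives lam' = lam, and then u' = u. *)
From HB Require Import structures.
From mathcomp Require Import all_boot all_order all_algebra.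
From mathcomp Require Import reals ring lra.
From mathcomp Require Import all_classical all_analysis.
Import Order.TTheory GRing.Theory Num.Theory.
Import numFieldNormedType.Exports.
Local Open Scope classical_set_scope.
Local Open Scope ring_scope.

Section Plane.
Context {R : realType}.
Implicit Types (s : seq (pt R)) (T : pt R -> Prop) (a b c p q r : pt R).

Lemma sum_indicator {n} (i : 'I_n) (F : 'I_n -> R) :
  \sum_(j < n) (j == i)%:R * F j = F i.
Proof.
rewrite (bigD1 i) //= eqxx mul1r big1 ?addr0 // => j /negbTE ->.
by rewrite mul0r.
Qed.

Lemma conv_hull_nth s (i : 'I_(size s)) : conv_hull s (nth (0, 0) s i).
Proof.
exists (fun j => (j == i)%:R); split; first by move=> j; rewrite ler0n.
split; last by rewrite !sum_indicator; case: (nth _ _ _).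
by rewrite -[RHS](sum_indicator i (fun=> 1)); apply: eq_bigr => j _; rewrite mulr1.
Qed.

Lemma conv_hull_comb3 {s p q r} (al be ga : R) :
  conv_hull s p -> conv_hull s q -> conv_hull s r ->
  0 <= al -> 0 <= be -> 0 <= ga -> al + be + ga = 1 ->
  conv_hull s (al * p.1 + be * q.1 + ga * r.1, al * p.2 + be * q.2 + ga * r.2).
Proof.
move=> [wp [wp0 [wp1 ->]]] [wq [wq0 [wq1 ->]]] [wr [wr0 [wr1 ->]]] al0 be0 ga0 sum1.
exists (fun i => al * wp i + be * wq i + ga * wr i); split.
  by move=> i; rewrite !addr_ge0 ?mulr_ge0.
split; first by rewrite !big_split /= -!mulr_sumr wp1 wq1 wr1 !mulr1.
by congr pair; rewrite !mulr_sumr -!big_split /=; apply: eq_bigr => i _; ring.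
Qed.

Lemma conv_hull_comb2 {s p q} (m : R) :
  conv_hull s p -> conv_hull s q -> 0 <= m <= 1 ->
  conv_hull s (m * p.1 + (1 - m) * q.1, m * p.2 + (1 - m) * q.2).
Proof.
move=> hp hq /andP[m0 m1].
have := @conv_hull_comb3 s p q q m (1 - m) 0 hp hq hq m0.
by rewrite !mul0r !addr0; apply=> //; lra.
Qed.

Lemma triangle_a a b c : triangle a b c a.
Proof. exact: (@conv_hull_nth [:: a; b; c] (@Ordinal 3 0 isT)). Qed.

Lemma triangle_b a b c : triangle a b c b.
Proof. exact: (@conv_hull_nth [:: a; b; c] (@Ordinal 3 1 isT)). Qed.

Lemma triangle_c a b c : triangle a b c c.
Proof. exact: (@conv_hull_nth [:: a; b; c] (@Ordinal 3 2 isT)). Qed.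

Lemma triangleP a b c x : triangle a b c x ->
  exists al be ga : R, [/\ 0 <= al, 0 <= be, 0 <= ga, al + be + ga = 1 &
    x = (al * a.1 + be * b.1 + ga * c.1, al * a.2 + be * b.2 + ga * c.2)].
Proof.
move=> [w [w0 [w1 ->]]]; move: w1; rewrite !big_ord_recl !big_ord0 /= => w1.
exists (w ord0), (w (lift ord0 ord0)), (w (lift ord0 (lift ord0 ord0))).
by split => //; [rewrite -w1; ring | congr pair; ring].
Qed.

Lemma triangle_sub_conv_hull {s p q r x} :
  conv_hull s p -> conv_hull s q -> conv_hull s r ->
  triangle p q r x -> conv_hull s x.
Proof.
move=> hp hq hr /triangleP[al [be [ga [al0 be0 ga0 sum1 ->]]]].
exact: conv_hull_comb3.
Qed.

Lemma hom_set_triangle a b c lam u x : hom_set (triangle a b c) lam u x ->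
  triangle (hom_pt lam u a) (hom_pt lam u b) (hom_pt lam u c) x.
Proof.
move=> [y [/triangleP[al [be [ga [al0 be0 ga0 sum1 ->]]]] ->]].
pose P := hom_pt lam u.
have := conv_hull_comb3 al be ga (triangle_a (P a) (P b) (P c))
  (triangle_b (P a) (P b) (P c)) (triangle_c (P a) (P b) (P c)) al0 be0 ga0 sum1.
have -> : ga = 1 - al - be by lra.
by rewrite /hom_pt /=; congr conv_hull; congr pair; ring.
Qed.

Lemma ball_of_dist2 (y z : pt R) (e : R) : 0 < e -> dist2 y z < e * e -> ball z e y.
Proof.
rewrite /dist2 /dot /psub /= => e0 yz.
have coord_lt (d d' : R) : d * d + d' * d' < e * e -> `|d| < e.
  by move=> h; rewrite ltr_norml; apply/andP; split; nra.
by split; rewrite /ball /= distrC; apply: coord_lt; [|rewrite addrC]; exact: yz.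
Qed.

Definition std_simplex n : set 'rV[R]_n :=
  [set v | forall i, `[0, 1]%classic (v ord0 i)] `&` [set v | \sum_(i < n) v ord0 i = 1].

Definition barycenter s (v : 'rV[R]_(size s)) : pt R :=
  (\sum_(i < size s) v ord0 i * (nth (0, 0) s i).1,
   \sum_(i < size s) v ord0 i * (nth (0, 0) s i).2).

Lemma continuous_weighted_sum n (x : 'I_n -> R) :
  continuous (fun v : 'rV[R]_n => \sum_(i < n) v ord0 i * x i).
Proof.
apply: continuous_big => [|i _ v]; first exact: add_continuous.
by apply: continuousM; [exact: coord_continuous | exact: cst_continuous].
Qed.

Lemma continuous_barycenter s : continuous (barycenter s).
Proof.
move=> v; exact: (cvg_pair (continuous_weighted_sum _ _ v) (continuous_weighted_sum _ _ v)).
Qed.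

Lemma compact_std_simplex n : compact (std_simplex n).
Proof.
apply: compact_closedI; first exact: (@rV_compact _ n _ (fun=> @segment_compact R 0 1)).
have sum_cont : continuous (fun v : 'rV[R]_n => \sum_(i < n) v ord0 i).
  by apply: continuous_big => [|i _]; [exact: add_continuous | exact: coord_continuous].
exact: (proj1 (continuous_closedP _) sum_cont _ (@closed_eq R 1)).
Qed.

Lemma conv_hull_image s : conv_hull s = barycenter s @` std_simplex (size s).
Proof.
apply/seteqP; split => [x [w [w0 [w1 ->]]] | _ [v [v01 v1] <-]].
  exists (\row_i w i); last by congr pair; apply: eq_bigr => i _; rewrite mxE.
  split; last by rewrite /=; under eq_bigr do rewrite mxE.
  move=> i; rewrite /= mxE in_itv /= w0 /= -w1.
  by rewrite (bigD1 i) //= lerDl sumr_ge0.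
exists (fun i => v ord0 i); split => //.
by move=> i; have := v01 i; rewrite /= in_itv /= => /andP[].
Qed.

Lemma closed_conv_hull s : closed (conv_hull s).
Proof.
rewrite conv_hull_image; apply: compact_closed; first exact: norm_hausdorff.
apply: continuous_compact; last exact: compact_std_simplex.
exact/continuous_subspaceT/continuous_barycenter.
Qed.

Lemma conv_hull_closure s z : Defs.closure (conv_hull s) z -> conv_hull s z.
Proof.
move=> hz; apply: closed_conv_hull => B /nbhs_ballP[e e0 eB].
have [y [hy yz]] := hz e e0; exists y; split => //.
by apply: eB; exact: ball_of_dist2.
Qed.

Lemma polytope_boundary T z : is_polytope T -> boundary T z -> T z.
Proof.
move=> [s Ts] [hz _]; apply/Ts/conv_hull_closure => e e0.
by have [y [hy yz]] := hz e e0; exists y; split => //; exact/Ts.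
Qed.

Lemma inbody_feasible {T a b c lam u} :
  is_polytope T -> boundary T (hom_pt lam u a) -> boundary T (hom_pt lam u b) ->
  boundary T (hom_pt lam u c) -> forall x, hom_set (triangle a b c) lam u x -> T x.
Proof.
move=> hT ba bb bc x /hom_set_triangle hx; have [s Ts] := hT.
apply/Ts; apply: triangle_sub_conv_hull hx; apply/Ts; exact: polytope_boundary.
Qed.

Definition normals_surround T p q r : Prop :=
  ~ (exists h : pt R, h <> (0, 0) /\
       forall v, (normal_cone T p v \/ normal_cone T q v \/ normal_cone T r v) ->
                 0 <= dot h v).

Lemma normal_cone_ge0 T z y v : normal_cone T z v -> T y -> 0 <= dot (psub z y) v.
Proof.
move=> hv /hv le0; have -> : dot (psub z y) v = - dot v (psub y z).
  by rewrite /dot /psub /=; ring.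
by rewrite oppr_ge0.
Qed.

Lemma psub_hom_pt lam u u' p : psub (hom_pt lam u p) (hom_pt lam u' p) = psub u u'.
Proof. by rewrite /psub /hom_pt /=; congr pair; ring. Qed.

Lemma psub_eq0 p q : psub p q = (0, 0) -> p = q.
Proof.
case: p q => [p1 p2] [q1 q2] [/eqP + /eqP].
by rewrite !subr_eq0 => /eqP -> /eqP ->.
Qed.

Lemma normals_surround_translate {T a b c lam u u'} :
  normals_surround T (hom_pt lam u a) (hom_pt lam u b) (hom_pt lam u c) ->
  T (hom_pt lam u' a) -> T (hom_pt lam u' b) -> T (hom_pt lam u' c) -> u' = u.
Proof.
move=> hsur ha hb hc; case: (eqVneq u u') => [//|neq]; exfalso.
apply: hsur; exists (psub u u'); split; first by move/psub_eq0/eqP; exact/negP.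
move=> v [hv|[hv|hv]].
- by rewrite -(psub_hom_pt lam _ _ a); exact: normal_cone_ge0 hv ha.
- by rewrite -(psub_hom_pt lam _ _ b); exact: normal_cone_ge0 hv hb.
- by rewrite -(psub_hom_pt lam _ _ c); exact: normal_cone_ge0 hv hc.
Qed.

Lemma hom_set_translate_sub a b c lam lam' u' q y :
  0 < lam <= lam' -> triangle a b c q -> triangle a b c y ->
  hom_set (triangle a b c) lam' u' (hom_pt lam (hom_pt (lam' - lam) u' q) y).
Proof.
move=> /andP[lam_gt0 le] hq hy.
have lam'_gt0 : 0 < lam' := lt_le_trans lam_gt0 le.
have lam'_neq0 : lam' != 0 by rewrite gt_eqF.
have m01 : 0 <= lam / lam' <= 1.
  by apply/andP; split; [rewrite divr_ge0 ?ltW | rewrite ler_pdivrMr // mul1r].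
exists (lam / lam' * y.1 + (1 - lam / lam') * q.1, lam / lam' * y.2 + (1 - lam / lam') * q.2).
split; first exact: conv_hull_comb2.
by rewrite /hom_pt /=; congr pair; field.
Qed.

Lemma hom_pt_inj {t u p q} : t != 0 -> hom_pt t u p = hom_pt t u q -> p = q.
Proof.
move=> t_neq0 [/addIr/(mulfI t_neq0) e1 /addIr/(mulfI t_neq0) e2].
by rewrite (surjective_pairing p) e1 e2 -surjective_pairing.
Qed.

Lemma aff_indep_neq {a b c} : aff_indep a b c -> a <> b.
Proof. by rewrite /aff_indep => + eab; rewrite eab !subrr !mul0r subrr eqxx. Qed.

Lemma normals_surround_maximal {T a b c lam u lam' u'} :
  aff_indep a b c -> 0 < lam ->
  normals_surround T (hom_pt lam u a) (hom_pt lam u b) (hom_pt lam u c) ->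
  (forall x, hom_set (triangle a b c) lam' u' x -> T x) -> lam <= lam' ->
  lam' = lam /\ u' = u.
Proof.
move=> hind lam_gt0 hsur feas le.
have shift q : triangle a b c q -> hom_pt (lam' - lam) u' q = u.
  move=> hq; have lam_le : 0 < lam <= lam' by rewrite lam_gt0 le.
  have inT y : triangle a b c y -> T (hom_pt lam (hom_pt (lam' - lam) u' q) y).
    by move=> hy; apply/feas/hom_set_translate_sub.
  exact: normals_surround_translate hsur
    (inT _ (triangle_a a b c)) (inT _ (triangle_b a b c)) (inT _ (triangle_c a b c)).
have eq_lam : lam' = lam.
  have [/eqP|t_neq0] := eqVneq (lam' - lam) 0; first by rewrite subr_eq0 => /eqP.
  case: (aff_indep_neq hind); apply: (hom_pt_inj (u := u') t_neq0).
  by rewrite (shift _ (triangle_a a b c)) (shift _ (triangle_b a b c)).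
split=> //; rewrite -(shift a (triangle_a a b c)) eq_lam subrr /hom_pt /=.
by rewrite !mul0r !add0r -surjective_pairing.
Qed.

Lemma inbody_eq_optimal {T a b c lam0 u0} :
  is_polytope T -> aff_indep a b c -> is_optimal (triangle a b c) T lam0 u0 ->
  forall S, inbody a b c T S -> forall x, S x <-> hom_set (triangle a b c) lam0 u0 x.
Proof.
move=> hT hind [_ [feas0 opt]] S [lam [u [lam_gt0 [hS [ba [bb [bc hsur]]]]]]].
have feas := inbody_feasible hT ba bb bc.
have [-> ->] := normals_surround_maximal hind lam_gt0 hsur feas0 (opt lam u (ltW lam_gt0) feas).
exact: hS.
Qed.

Lemma inbody_ext {a b c T S S'} :
  (forall x, S x <-> S' x) -> inbody a b c T S -> inbody a b c T S'.
Proof.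
move=> eqS [lam [u [lam_gt0 [hS hbd]]]]; exists lam, u; split=> //; split=> // x.
by rewrite -eqS.
Qed.

End Plane.

Theorem proposition7p3 (R : realType) (T : pt R -> Prop) (a b c : pt R)
    (lam0 : R) (u0 : pt R) :
  is_polytope T -> aff_indep a b c ->
  is_optimal (triangle a b c) T lam0 u0 ->
  (exists S : pt R -> Prop, inbody a b c T S) ->
  inbody a b c T (hom_set (triangle a b c) lam0 u0) /\
  (forall S : pt R -> Prop, inbody a b c T S ->
     forall x, S x <-> hom_set (triangle a b c) lam0 u0 x).
Proof.
move=> hT hind hopt [S hS].
have uniq := inbody_eq_optimal hT hind hopt.
by split; [exact: inbody_ext (uniq S hS) hS | exact: uniq].
Qed.
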